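(* Let $(\mathcal{C},\mathbb{E},\mathfrak{s})$ be an extriangulated category and $\mathbb{F}\subseteq\mathbb{E}$ an additive subfunctor. Let $K\to P\xrightarrow{p}C\overset{\gamma}{\dashrightarrow}$ be an $\mathbb{E}$-triangle with $p$ an $\mathbb{E}$-projective morphism, and let $\varphi:X\to C$ be a morphism. Then $\varphi$ is an $\mathbb{F}$-phantom morphism if and only if $\varphi^\star\gamma\in\mathbb{F}(X,K)$, i.e. the $\mathbb{E}$-triangle $K\to Y\to X\overset{\varphi^\star\gamma}{\dashrightarrow}$ realizing $\varphi^\star\gamma$ is an $\mathbb{F}$-triangle.
   Context: An extriangulated category $(\mathcal{C},\mathbb{E},\mathfrak{s})$ in the sense of Nakaoka–Palu consists of an additive category $\mathcal{C}$, a biadditive functor $\mathbb{E}:\mathcal{C}^{\mathrm{op}}\times\mathcal{C}\to\mathrm{Ab}$ and an additive realization $\mathfrak{s}$ assigning to each $\delta\in\mathbb{E}(C,A)$ an equivalence class of sequences $A\to B\to C$ (an $\mathbb{E}$-triangle $A\to B\to C\overset{\delta}{\dashrightarrow}$), satisfying axioms (ET1)–(ET4) and (ET3)$^{\mathrm{op}}$, (ET4)$^{\mathrm{op}}$. For $\delta\in\mathbb{E}(C,A)$, $a:A\to A'$, $c:C'\to C$: $a_\star\delta=\mathbb{E}(C,a)(\delta)$, $c^\star\delta=\mathbb{E}(c,A)(\delta)$. An additive subfunctor $\mathbb{F}\subseteq\mathbb{E}$: subgroups $\mathbb{F}(C,A)\subseteq\mathbb{E}(C,A)$ stable under $a_\star,c^\star$;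 an $\mathbb{F}$-triangle is an $\mathbb{E}$-triangle whose extension lies in $\mathbb{F}$. $\varphi:X\to C$ is $\mathbb{F}$-phantom if $\varphi^\star\delta\in\mathbb{F}(X,A)$ for every $A$ and every $\delta\in\mathbb{E}(C,A)$. A morphism $p:P\to C$ is $\mathbb{E}$-projective if $p^\star\delta=0$ for every $\delta\in\mathbb{E}(C,A)$ and every $A$. *)

From HB Require Import structures.
From mathcomp Require Import all_boot all_algebra.
Set Implicit Arguments.
Unset Strict Implicit.
Unset Printing Implicit Defensive.
Import GRing.Theory.
Local Open Scope ring_scope.

Record PreAddCat := {
  Obj : Type;
  Mor : Obj -> Obj -> zmodType;
  idm : forall A, Mor A A;
  comp : forall A B C, Mor B C -> Mor A B -> Mor A C;
  compA : forall A B C D (h : Mor C D) (g : Mor B C) (f : Mor A B),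
      comp h (comp g f) = comp (comp h g) f;
  comp1m : forall A B (f : Mor A B), comp (idm B) f = f;
  compm1 : forall A B (f : Mor A B), comp f (idm A) = f;
  compDl : forall A B C (g g' : Mor B C) (f : Mor A B),
      comp (g + g') f = comp g f + comp g' f;
  compDr : forall A B C (g : Mor B C) (f f' : Mor A B),
      comp g (f + f') = comp g f + comp g f' }.

Arguments idm {_} A.
Arguments comp {_ A B C} g f.
Arguments Mor {_} A B.

Definition is_biprod (Cat : PreAddCat) (A B D : Obj Cat)
  (i1 : Mor A D) (i2 : Mor B D) (p1 : Mor D A) (p2 : Mor D B) : Prop :=
  [/\ comp p1 i1 = idm A, comp p2 i2 = idm B, comp p1 i2 = 0,
      comp p2 i1 = 0 & comp i1 p1 + comp i2 p2 = idm D].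

Definition is_iso (Cat : PreAddCat) (A B : Obj Cat) (f : Mor A B) : Prop :=
  exists g : Mor B A, comp g f = idm A /\ comp f g = idm B.

Record AddCat := {
  pre :> PreAddCat;
  zero_obj_ex : exists Z : Obj pre, idm Z = 0;
  biprod_ex : forall A B : Obj pre, exists (D : Obj pre) (i1 : Mor A D)
      (i2 : Mor B D) (p1 : Mor D A) (p2 : Mor D B), is_biprod i1 i2 p1 p2 }.

(* Axioms of an extriangulated category, for given data
   E : C^op x C -> Ab   (E C A = extensions of C by A),
   pull c = c^*  ,  push a = a_*  ,
   realize d x y  <->  A -x-> B -y-> C belongs to the class s(d).       *)
Section ExtriAxioms.
Variable Cat : AddCat.
Variable E : Obj Cat -> Obj Cat -> zmodType.
Variable pull : forall {C' C A : Obj Cat}, Mor C' C -> E C A -> E C' A.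
Variable push : forall {C A A' : Obj Cat}, Mor A A' -> E C A -> E C A'.
Variable realize : forall {C A : Obj Cat}, E C A ->
    forall {B : Obj Cat}, Mor A B -> Mor B C -> Prop.


Definition ET1 : Prop :=
  (forall C A (d : E C A), pull (idm C) d = d) /\
      (forall C A (d : E C A), push (idm A) d = d) /\
      (forall C C' C'' A (c : Mor C' C) (c' : Mor C'' C') (d : E C A),
          pull (comp c c') d = pull c' (pull c d)) /\
      (forall C A A' A'' (a : Mor A A') (a' : Mor A' A'') (d : E C A),
          push (comp a' a) d = push a' (push a d)) /\
      (forall C' C A A' (c : Mor C' C) (a : Mor A A') (d : E C A),
          push a (pull c d) = pull c (push a d)) /\
      (forall C' C A (c : Mor C' C) (d d' : E C A),
          pull c (d + d') = pull c d + pull c d') /\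
      (forall C A A' (a : Mor A A') (d d' : E C A),
          push a (d + d') = push a d + push a d') /\
      (forall C' C A (c c' : Mor C' C) (d : E C A),
          pull (c + c') d = pull c d + pull c' d) /\
      (forall C A A' (a a' : Mor A A') (d : E C A),
          push (a + a') d = push a d + push a' d).

Definition realization_class : Prop :=
  [/\
      (forall C A (d : E C A), exists B (x : Mor A B) (y : Mor B C), realize d x y),
      (forall C A (d : E C A) B B' (x : Mor A B) (y : Mor B C)
              (x' : Mor A B') (y' : Mor B' C) (b : Mor B B'),
          realize d x y -> is_iso b -> comp b x = x' -> comp y' b = y ->
          realize d x' y') &
      (forall C A (d : E C A) B B' (x : Mor A B) (y : Mor B C)
              (x' : Mor A B') (y' : Mor B' C),
          realize d x y -> realize d x' y' ->
          exists b : Mor B B', [/\ is_iso b, comp b x = x' & comp y' b = y])].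

Definition realization_morph : Prop :=
  forall C A C' A' (d : E C A) (d' : E C' A') B B'
         (x : Mor A B) (y : Mor B C) (x' : Mor A' B') (y' : Mor B' C')
         (a : Mor A A') (c : Mor C C'),
    realize d x y -> realize d' x' y' -> push a d = pull c d' ->
    exists b : Mor B B', comp b x = comp x' a /\ comp y' b = comp c y.

Definition realization_additive : Prop :=
  (forall C A D (i1 : Mor A D) (i2 : Mor C D) (p1 : Mor D A) (p2 : Mor D C),
      is_biprod i1 i2 p1 p2 -> realize (0 : E C A) i1 p2) /\
  (forall C A C' A' B B' (d : E C A) (d' : E C' A')
          (x : Mor A B) (y : Mor B C) (x' : Mor A' B') (y' : Mor B' C')
          DA (iA : Mor A DA) (iA' : Mor A' DA) (pA : Mor DA A) (pA' : Mor DA A')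
          DB (iB : Mor B DB) (iB' : Mor B' DB) (pB : Mor DB B) (pB' : Mor DB B')
          DC (iC : Mor C DC) (iC' : Mor C' DC) (pC : Mor DC C) (pC' : Mor DC C')
          (t : E DC DA),
      realize d x y -> realize d' x' y' ->
      is_biprod iA iA' pA pA' -> is_biprod iB iB' pB pB' ->
      is_biprod iC iC' pC pC' ->
      (* t = d (+) d' under E(C(+)C', A(+)A') = E(C,A)+E(C,A')+E(C',A)+E(C',A') *)
      push pA (pull iC t) = d -> push pA' (pull iC' t) = d' ->
      push pA (pull iC' t) = 0 -> push pA' (pull iC t) = 0 ->
      realize t (comp iB (comp x pA) + comp iB' (comp x' pA'))
                (comp iC (comp y pB) + comp iC' (comp y' pB'))).

Definition ET2 : Prop :=
  [/\ realization_class, realization_morph & realization_additive].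

Definition ET3 : Prop :=
  forall C A C' A' (d : E C A) (d' : E C' A') B B'
         (x : Mor A B) (y : Mor B C) (x' : Mor A' B') (y' : Mor B' C')
         (a : Mor A A') (b : Mor B B'),
    realize d x y -> realize d' x' y' -> comp b x = comp x' a ->
    exists c : Mor C C', comp c y = comp y' b /\ push a d = pull c d'.

Definition ET3op : Prop :=
  forall C A C' A' (d : E C A) (d' : E C' A') B B'
         (x : Mor A B) (y : Mor B C) (x' : Mor A' B') (y' : Mor B' C')
         (b : Mor B B') (c : Mor C C'),
    realize d x y -> realize d' x' y' -> comp y' b = comp c y ->
    exists a : Mor A A', comp x' a = comp b x /\ push a d = pull c d'.

Definition ET4 : Prop :=
  forall A B C D F (d : E D A) (d' : E F B)
         (f : Mor A B) (f' : Mor B D) (g : Mor B C) (g' : Mor C F),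
    realize d f f' -> realize d' g g' ->
    exists (Eo : Obj Cat) (h : Mor A C) (h' : Mor C Eo) (dd : Mor D Eo)
           (e : Mor Eo F) (d'' : E Eo A),
      realize d'' h h' /\ h = comp g f /\ comp h' g = comp dd f' /\
          comp e h' = g' /\
          realize (push f' d') dd e /\ pull dd d'' = d /\ push f d'' = pull e d'.

Definition ET4op : Prop :=
  forall A B C D F (d : E A D) (d' : E B F)
         (f' : Mor D B) (f : Mor B A) (g' : Mor F C) (g : Mor C B),
    realize d f' f -> realize d' g' g ->
    exists (Eo : Obj Cat) (h : Mor C A) (h' : Mor Eo C) (dd : Mor Eo D)
           (e : Mor F Eo) (d'' : E A Eo),
      realize d'' h' h /\ h = comp f g /\ comp g h' = comp f' dd /\
          comp h' e = g' /\
          realize (pull f' d') e dd /\ push dd d'' = d /\ pull f d'' = push e d'.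

End ExtriAxioms.

Record Extri (Cat : AddCat) := {
  Ext : Obj Cat -> Obj Cat -> zmodType;
  pull : forall (C' C A : Obj Cat), Mor C' C -> Ext C A -> Ext C' A;
  push : forall (C A A' : Obj Cat), Mor A A' -> Ext C A -> Ext C A';
  realize : forall (C A : Obj Cat), Ext C A ->
      forall B : Obj Cat, Mor A B -> Mor B C -> Prop;
  ext_ET1 : ET1 pull push;
  ext_ET2 : ET2 pull push realize;
  ext_ET3 : ET3 pull push realize;
  ext_ET3op : ET3op pull push realize;
  ext_ET4 : ET4 pull push realize;
  ext_ET4op : ET4op pull push realize }.

Arguments Ext {Cat} _ C A.
Arguments pull {Cat _ C' C A} c d.
Arguments push {Cat _ C A A'} a d.
Arguments realize {Cat _ C A} d {B} x y.

Record AddSubfunctor (Cat : AddCat) (X : Extri Cat) := {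
  Fmem : forall C A : Obj Cat, Ext X C A -> Prop;
  Fmem0 : forall C A, Fmem (0 : Ext X C A);
  FmemD : forall C A (d d' : Ext X C A), Fmem d -> Fmem d' -> Fmem (d + d');
  FmemN : forall C A (d : Ext X C A), Fmem d -> Fmem (- d);
  Fmem_push : forall C A A' (a : Mor A A') (d : Ext X C A),
      Fmem d -> Fmem (push a d);
  Fmem_pull : forall C' C A (c : Mor C' C) (d : Ext X C A),
      Fmem d -> Fmem (pull c d) }.

Arguments Fmem {Cat X} _ {C A} d.

Definition E_projective (Cat : AddCat) (X : Extri Cat) (P C : Obj Cat)
  (p : Mor P C) : Prop :=
  forall (A : Obj Cat) (d : Ext X C A), pull p d = 0.

Definition F_phantom (Cat : AddCat) (X : Extri Cat) (F : AddSubfunctor X)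
  (Y C : Obj Cat) (phi : Mor Y C) : Prop :=
  forall (A : Obj Cat) (d : Ext X C A), Fmem F (pull phi d).

From Pilot Require Import Defs.
From mathcomp Require Import all_boot all_algebra.

Set Implicit Arguments.
Unset Strict Implicit.

Local Open Scope ring_scope.

(* Every extension d in E(C, A) is of the form a_* gamma: realize d as
   A --> B --y--> C; since p^* d = 0, the morphism p factors through y, and
   (ET3)^op applied to this factorization over the identity of C yields
   a : K --> A with a_* gamma = d.  Hence phi^* d = a_* (phi^* gamma), which
   lies in F as soon as phi^* gamma does. *)

Section ExtriangulatedFacts.
Variables (Cat : AddCat) (X : Extri Cat).

Lemma pull_id (C A : Obj Cat) (d : Ext X C A) : pull (idm C) d = d.
Proof. by case: (ext_ET1 X). Qed.

Lemma push_id (C A : Obj Cat) (d : Ext X C A) : push (idm A) d = d.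
Proof. by case: (ext_ET1 X) => _ []. Qed.

Lemma push_pullC (C' C A A' : Obj Cat) (c : Mor C' C) (a : Mor A A')
    (d : Ext X C A) :
  push a (pull c d) = pull c (push a d).
Proof. by case: (ext_ET1 X) => _ [_ [_ [_ []]]]. Qed.

Lemma realize_exists (C A : Obj Cat) (d : Ext X C A) :
  exists B (x : Mor A B) (y : Mor B C), realize d x y.
Proof. by case: (ext_ET2 X) => [[]]. Qed.

(* Compare the split triangle A --> A + C' --> C' realizing 0 with the
   realization of d, along (id_A, c), which is legitimate since c^* d = 0. *)
Lemma factor_through_deflation (C A B C' : Obj Cat) (d : Ext X C A)
    (x : Mor A B) (y : Mor B C) (c : Mor C' C) :
  realize d x y -> pull c d = 0 -> exists b : Mor C' B, Defs.comp y b = c.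
Proof.
move=> Hd Hcd.
have [_ Hmorph [Hsplit _]] := ext_ET2 X.
have [D [i1 [i2 [p1 [p2 Hbp]]]]] := biprod_ex A C'.
have Hpush : push (idm A) (0 : Ext X C' A) = pull c d by rewrite push_id Hcd.
have [b [_ Hyb]] := Hmorph _ _ _ _ _ _ _ _ _ _ _ _ _ _ (Hsplit _ _ _ _ _ _ _ Hbp)
  Hd Hpush.
exists (Defs.comp b i2).
case: Hbp => _ Hp2i2 _ _ _.
by rewrite Defs.compA Hyb -Defs.compA Hp2i2 Defs.compm1.
Qed.

Lemma E_projective_push_onto (K P C A : Obj Cat) (i : Mor K P) (p : Mor P C)
    (gamma : Ext X C K) (d : Ext X C A) :
  realize gamma i p -> E_projective X p -> exists a : Mor K A, push a gamma = d.
Proof.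
move=> Hgamma Hp.
have [B [x [y Hd]]] := realize_exists d.
have [b Hyb] := factor_through_deflation Hd (Hp A d).
have Hfactor : Defs.comp y b = Defs.comp (idm C) p by rewrite Defs.comp1m.
have [a [_ Ha]] := ext_ET3op Hgamma Hd Hfactor.
by exists a; rewrite Ha pull_id.
Qed.

End ExtriangulatedFacts.

Theorem lemma4p1 (Cat : AddCat) (X : Extri Cat) (F : AddSubfunctor X)
  (K P C : Obj Cat) (i : Mor K P) (p : Mor P C) (gamma : Ext X C K)
  (Htri : realize gamma i p) (Hp : E_projective X p)
  (Y : Obj Cat) (phi : Mor Y C) :
  F_phantom F phi <-> Fmem F (pull phi gamma).
Proof.
split=> [Hphi | Hgamma A d]; first exact: Hphi.
have [a <-] := E_projective_push_onto d Htri Hp.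
by rewrite -push_pullC; apply: Fmem_push.
Qed.
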